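(* Let $k \geq 2$ be an integer. (i) For all $k$-admissible integers $n > 1$ such that $n \not\equiv 1 \pmod{k}$, there is a partial $k$-star design of order $n$ with $2\lfloor \frac{n-2}{k}\rfloor$ stars that is not completable. (ii) For all $k$-admissible integers $n > 1$ such that $n \equiv 1 \pmod{k}$, there is a partial $k$-star design of order $n$ with $\frac{2n-2}{k}-1$ stars that is not completable.
   Context: A $k$-star is a copy of $K_{1,k}$. A partial $k$-star design of order $n$ is a pair $(V,\mathcal{A})$ where $V$ is a set of $n$ vertices and $\mathcal{A}$ is a set of edge-disjoint $k$-stars that are subgraphs of the complete graph $K_V$; if every edge of $K_V$ lies in some star of $\mathcal{A}$ it is a $k$-star design. It is completable if there is a $k$-star design $(V,\mathcal{B})$ with $\mathcal{A}\subseteq\mathcal{B}$. A positive integer $n$ is $k$-admissible if $\binom{n}{2}\equiv 0 \pmod{k}$. *)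

From mathcomp Require Import all_boot.
Set Implicit Arguments. Unset Strict Implicit. Unset Printing Implicit Defensive.

(* A star is represented by (center, set of leaves); its edge set is
   { {c,l} | l in leaves }.  Since k >= 2, a k-star subgraph determines
   its center and leaves uniquely, so this representation is faithful. *)
Definition star (n : nat) := ('I_n * {set 'I_n})%type.

Definition star_edges (n : nat) (s : star n) : {set {set 'I_n}} :=
  [set [set s.1; l] | l in s.2].

Definition is_kstar (n k : nat) (s : star n) : bool :=
  (#|s.2| == k) && (s.1 \notin s.2).

Definition partial_kstar_design (n k : nat) (A : {set star n}) : Prop :=
  (forall s, s \in A -> is_kstar k s) /\
  (forall s t, s \in A -> t \in A -> s != t ->
     [disjoint star_edges s & star_edges t]).

Definition kstar_design (n k : nat) (B : {set star n}) : Prop :=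
  partial_kstar_design k B /\
  (forall x y : 'I_n, x != y -> exists2 s, s \in B & [set x; y] \in star_edges s).

Definition completable (n k : nat) (A : {set star n}) : Prop :=
  exists B : {set star n}, A \subset B /\ kstar_design k B.

Definition k_admissible (k n : nat) : bool := 'C(n, 2) %% k == 0.

From mathcomp Require Import all_boot.
From mathcomp Require Import zify.
Set Implicit Arguments. Unset Strict Implicit. Unset Printing Implicit Defensive.

(* Set aside p vertices, among them u and v, cut the other n - p vertices into
   q blocks of size k, and take the "double fan" of the 2q stars centred at u or
   at v with a block as leaves.  The edge uv is uncovered, so a completion would
   contain a new star centred at u or v whose k leaves are joined to its centre
   by uncovered edges; only the p - 1 other set-aside vertices qualify.  For
   n <> 1 mod k take p = 2 + (n - 2) mod k, which is at most k.  For n = 1 mod k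
   take p = k + 1 and add the star centred at a set-aside vertex x with the
   other k set-aside vertices as leaves: it covers ux and vx, leaving k - 1
   candidates. *)

Lemma card_ord_interval n a b : b <= n -> #|[set x : 'I_n | a <= x < b]| = b - a.
Proof.
move=> bn; rewrite -sum1_card.
rewrite (eq_bigl (fun x : 'I_n => a <= x < b)) => [|x]; last by rewrite inE.
rewrite -(big_mkord (fun x => a <= x < b) (fun=> 1)).
rewrite -(big_nat_widen _ _ _ (fun i => a <= i) _ bn) //.
by rewrite -[b - a]muln1 -sum_nat_const_nat (@big_nat_widenl _ _ _ a 0).
Qed.

Lemma set2_eq_cases (T : finType) (a b c d : T) :
  [set a; b] = [set c; d] -> (a = c /\ b = d) \/ (a = d /\ b = c).
Proof.
move=> E.
have /set2P ha : a \in [set c; d] by rewrite -E set21.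
have /set2P hb : b \in [set c; d] by rewrite -E set22.
have /set2P hc : c \in [set a; b] by rewrite E set21.
have /set2P hd : d \in [set a; b] by rewrite E set22.
by case: ha => ea; case: hb => eb; case: hc => ec; case: hd => ed; subst; auto.
Qed.

Section Stars.
Variable n : nat.
Implicit Types (A B : {set star n}) (s t : star n) (c l : 'I_n).

Lemma disjoint_star_edges s t :
  (s.1 = t.1 -> [disjoint s.2 & t.2]) -> ~ (s.1 \in t.2 /\ t.1 \in s.2) ->
  [disjoint star_edges s & star_edges t].
Proof.
move=> same_center crossed; rewrite disjoint_subset; apply/subsetP => _ /imsetP[l ls ->].
rewrite inE; apply/negP => /imsetP[l' lt' /set2_eq_cases[[e1 e2]|[e1 e2]]].
- by move: (disjointFr (same_center e1) ls); rewrite e2 lt'.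
- by apply: crossed; rewrite e1 -e2.
Qed.

Definition covered A (e : {set 'I_n}) : bool := [exists s in A, e \in star_edges s].

Definition free_leaves A c : {set 'I_n} := [set l | (l != c) && ~~ covered A [set c; l]].

Lemma covered_star A s l : s \in A -> l \in s.2 -> covered A [set s.1; l].
Proof. by move=> sA ls; apply/existsP; exists s; rewrite sA; apply/imsetP; exists l. Qed.

Lemma coveredU1 A s e : covered (s |: A) e = (e \in star_edges s) || covered A e.
Proof.
apply/existsP/orP => [[t /andP[/setU1P[-> | tA] et]] | [es | /existsP[t /andP[tA et]]]].
- by left.
- by right; apply/existsP; exists t; rewrite tA.
- by exists s; rewrite setU11.
- by exists t; rewrite setU1r.
Qed.

Variable k : nat.

Lemma partial_kstar_designU1 A s :
  partial_kstar_design k A -> is_kstar k s ->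
  (forall t, t \in A -> [disjoint star_edges s & star_edges t]) ->
  partial_kstar_design k (s |: A).
Proof.
move=> [kA disjA] ks disj_s; split=> [t /setU1P[-> // | /kA] // | t t'].
move=> /setU1P[-> | tA] /setU1P[-> | t'A] neq; first by rewrite eqxx in neq.
- exact: disj_s.
- by rewrite disjoint_sym; apply: disj_s.
- exact: disjA.
Qed.

Lemma completion_leaves_free A B s :
  A \subset B -> partial_kstar_design k B -> s \in B -> s \notin A ->
  s.2 \subset free_leaves A s.1.
Proof.
move=> sAB [kB disjB] sB sA; apply/subsetP => l ls; rewrite inE.
have /andP[_ center_out] := kB s sB.
apply/andP; split; first by apply: contraNneq center_out => <-.
apply/existsP => -[t /andP[tA et]].
have st : s != t by apply: contraNneq sA => ->.
have es : [set s.1; l] \in star_edges s by apply/imsetP; exists l.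
by have := disjointFr (disjB s t sB (subsetP sAB t tA) st) es; rewrite et.
Qed.

Lemma not_completable_of_uncovered_edge A u v :
  u != v -> ~~ covered A [set u; v] ->
  #|free_leaves A u| < k -> #|free_leaves A v| < k -> ~ completable k A.
Proof.
move=> uv uv_free few_u few_v [B [sAB [designB covB]]].
have [s sB /imsetP[l ls El]] := covB u v uv.
have sA : s \notin A.
  by apply: contra uv_free => sA; rewrite El; exact: covered_star.
have := subset_leq_card (completion_leaves_free sAB designB sB sA).
have /andP[/eqP -> _] := designB.1 s sB.
by case: (set2_eq_cases El) => [[<- _] | [_ <-]]; rewrite leqNgt ?few_u ?few_v.
Qed.

End Stars.

Section DoubleFan.
Variables (n k : nat) (u v : 'I_n) (P : {set {set 'I_n}}).
Hypotheses (neq_uv : u != v) (trivP : trivIset P) (cardP : {in P, forall B : {set 'I_n}, #|B| = k})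
  (u_notin_P : u \notin cover P) (v_notin_P : v \notin cover P).

Definition double_fan : {set star n} := setX [set u; v] P.

Lemma card_double_fan : #|double_fan| = 2 * #|P|.
Proof. by rewrite cardsX cards2 neq_uv. Qed.

Lemma double_fan_center s : s \in double_fan -> s.1 \notin cover P.
Proof. by case: s => c B; rewrite inE /= => /andP[/set2P[] -> _]. Qed.

Lemma double_fan_design : partial_kstar_design k double_fan.
Proof.
split=> [[c B] sF | [c B] [c' B'] sF tF neq].
  have /setXP[_ BP] := sF; apply/andP; split; first by rewrite cardP.
  by apply: contra (double_fan_center sF) => cB; apply/bigcupP; exists B.
have /setXP[_ BP] := sF; have /setXP[_ B'P] := tF.
apply: disjoint_star_edges => /= [cc | [cB' _]].
  move/trivIsetP: trivP; apply=> //.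
  by apply: contraNneq neq => <-; rewrite cc.
by case/negP: (double_fan_center sF); apply/bigcupP; exists B'.
Qed.

Lemma double_fan_uncovered : ~~ covered double_fan [set u; v].
Proof.
apply/negP => /existsP[[c B] /andP[sF /imsetP[l lB El]]].
have /setXP[_ BP] := sF.
have lP : l \in cover P by apply/bigcupP; exists B.
have /set2P[] : l \in [set u; v] by rewrite El set22.
all: by move=> lE; move: lP; rewrite lE ?(negbTE u_notin_P) ?(negbTE v_notin_P).
Qed.

Lemma free_leaves_double_fan (A : {set star n}) c :
  double_fan \subset A -> c \in [set u; v] -> free_leaves A c \subset ~: cover P :\ c.
Proof.
move=> sFA cuv; apply/subsetP => l; rewrite !inE => /andP[-> /= free_l].
apply: contra free_l => /bigcupP[B BP lB].
have sF : (c, B) \in double_fan by rewrite inE cuv.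
exact: (covered_star (subsetP sFA _ sF) lB).
Qed.

End DoubleFan.

Section Blocks.
Variables (n p q k : nat).
Hypotheses (k_gt0 : 0 < k) (def_n : p + q * k = n).

Definition block (i : nat) : {set 'I_n} := [set x : 'I_n | (p <= x) && ((x - p) %/ k == i)].

Definition blocks : {set {set 'I_n}} := [set block i | i : 'I_q].

Lemma card_block (i : 'I_q) : #|block i| = k.
Proof.
have i_lt := ltn_ord i.
have lt_n : p + i * k + k <= n by rewrite -def_n; nia.
rewrite -[k in RHS](addKn (p + i * k)) -(card_ord_interval (p + i * k) lt_n).
apply: eq_card => x; rewrite !inE eqn_leq leq_divRL // -[_ %/ k <= _]ltnS ltn_divLR //; lia.
Qed.

Lemma trivIset_blocks : trivIset blocks.
Proof.
apply/trivIsetP => _ _ /imsetP[i _ ->] /imsetP[j _ ->] neq.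
apply/pred0P => x /=; rewrite !inE; apply/negP => /andP[/andP[_ /eqP xi] /andP[_ /eqP xj]].
by move: neq; rewrite -xi -xj eqxx.
Qed.

Lemma mem_cover_blocks x : (x \in cover blocks) = (p <= x).
Proof.
rewrite cover_imset; apply/bigcupP/idP => [[i _] | px]; first by rewrite inE => /andP[].
have xi : (x - p) %/ k < q by rewrite ltn_divLR //; have := ltn_ord x; lia.
by exists (Ordinal xi); rewrite // inE px eqxx.
Qed.

Lemma card_uncovered_blocks : #|~: cover blocks| = p.
Proof.
have p_le_n : p <= n by rewrite -def_n leq_addr.
rewrite -[p]subn0 -(card_ord_interval 0 p_le_n).
by apply: eq_card => x; rewrite !inE mem_cover_blocks -ltnNge.
Qed.

Lemma card_mem_blocks : {in blocks, forall B : {set 'I_n}, #|B| = k}.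
Proof. by move=> _ /imsetP[i _ ->]; exact: card_block. Qed.

Lemma card_blocks : #|blocks| = q.
Proof.
rewrite card_imset ?card_ord // => i j eq_ij.
have /set0Pn[x xi] : block i != set0 by rewrite -card_gt0 card_block.
have := xi; rewrite eq_ij !inE => /andP[_ /eqP xj].
by move: xi; rewrite inE xj => /andP[_ /eqP /val_inj].
Qed.

End Blocks.

Section Fans.
Variables (n p q k : nat) (u v : 'I_n).
Hypotheses (k_gt0 : 0 < k) (def_n : p + q * k = n)
  (u_lt_p : u < p) (v_lt_p : v < p) (neq_uv : u != v).

Local Notation blocks := (blocks n p q k).
Local Notation fan := (double_fan u v blocks).

Lemma notin_cover_blocks x : (x \notin cover blocks) = (x < p).
Proof. by rewrite mem_cover_blocks // -ltnNge. Qed.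

Lemma fan_design : partial_kstar_design k fan.
Proof.
apply: double_fan_design; rewrite ?notin_cover_blocks //.
  exact: trivIset_blocks.
exact: card_mem_blocks.
Qed.

Lemma card_fan : #|fan| = 2 * q.
Proof. by rewrite card_double_fan // card_blocks. Qed.

Lemma fan_uncovered : ~~ covered fan [set u; v].
Proof. by apply: double_fan_uncovered; rewrite ?notin_cover_blocks. Qed.

Lemma card_uncovered_blocksD1 (c : 'I_n) : c < p -> #|~: cover blocks :\ c| = p.-1.
Proof.
move=> c_lt_p; have := cardsD1 c (~: cover blocks).
by rewrite card_uncovered_blocks // inE notin_cover_blocks c_lt_p add1n => /(congr1 predn) ->.
Qed.

Lemma fan_not_completable : p <= k -> ~ completable k fan.
Proof.
move=> p_le_k.
have few c : c \in [set u; v] -> #|free_leaves fan c| < k.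
  move=> cuv; have c_lt_p : c < p by case/set2P: cuv => ->.
  apply: leq_ltn_trans (subset_leq_card (free_leaves_double_fan (subxx _) cuv)) _.
  by rewrite card_uncovered_blocksD1 //; lia.
by apply: not_completable_of_uncovered_edge neq_uv fan_uncovered _ _; apply: few;
  rewrite !inE eqxx ?orbT.
Qed.

Variable x : 'I_n.
Hypotheses (def_p : p = k.+1) (x_lt_p : x < p) (x_notin_uv : x \notin [set u; v]).

Definition apex_star : star n := (x, ~: cover blocks :\ x).

Lemma apex_star_kstar : is_kstar k apex_star.
Proof. by rewrite /is_kstar /= setD11 card_uncovered_blocksD1 // def_p andbT. Qed.

Lemma apex_star_notin_fan : apex_star \notin fan.
Proof. by rewrite inE negb_and /= x_notin_uv. Qed.

Lemma apex_fan_design : partial_kstar_design k (apex_star |: fan).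
Proof.
apply: partial_kstar_designU1 fan_design apex_star_kstar _ => -[c B] /setXP[cuv BP].
apply: disjoint_star_edges => /= [xc | [xB _]].
  by move: x_notin_uv; rewrite xc cuv.
have : x \in cover blocks by apply/bigcupP; exists B.
by rewrite -[_ \in _]negbK notin_cover_blocks x_lt_p.
Qed.

Lemma card_apex_fan : #|apex_star |: fan| = (2 * q).+1.
Proof. by rewrite cardsU1 apex_star_notin_fan card_fan. Qed.

Lemma apex_fan_not_completable : ~ completable k (apex_star |: fan).
Proof.
have few c : c \in [set u; v] -> #|free_leaves (apex_star |: fan) c| < k.
  move=> cuv; have c_lt_p : c < p by case/set2P: cuv => ->.
  have cx : c != x by apply: contraNneq x_notin_uv => <-.
  have x_used : covered (apex_star |: fan) [set c; x].
    rewrite [[set c; x]]setUC; apply: (covered_star (setU11 apex_star fan)).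
    by rewrite !inE cx notin_cover_blocks.
  have : free_leaves (apex_star |: fan) c \proper ~: cover blocks :\ c.
    apply/properP; split; first exact: free_leaves_double_fan (subsetUr _ _) cuv.
    by exists x; rewrite !inE ?x_used ?andbF // eq_sym cx notin_cover_blocks.
  by move/proper_card; rewrite card_uncovered_blocksD1 // def_p.
apply: not_completable_of_uncovered_edge neq_uv _ _ _; try by apply: few; rewrite !inE eqxx ?orbT.
rewrite coveredU1 (negbTE fan_uncovered) orbF; apply/imsetP => -[l _].
rewrite /apex_star /= => /set2_eq_cases[[ux _] | [_ vx]].
- by move: x_notin_uv; rewrite ux set21.
- by move: x_notin_uv; rewrite vx set22.
Qed.

End Fans.

Lemma noncompletable_design_modn_neq1 n k : 2 <= k -> 1 < n -> n %% k != 1 ->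
  exists A : {set star n},
    [/\ partial_kstar_design k A, #|A| = 2 * ((n - 2) %/ k) & ~ completable k A].
Proof.
move=> k_ge2 n_gt1 n_mod; have k_gt0 : 0 < k by lia.
set p := (n - 2) %% k + 2; set q := (n - 2) %/ k.
have def_n : p + q * k = n by rewrite /p /q; have := divn_eq (n - 2) k; lia.
have p_le_k : p <= k.
  have : p <= k.+1 by rewrite /p; have := ltn_pmod (n - 2) k_gt0; lia.
  rewrite leq_eqVlt ltnS => /orP[/eqP p_eq | //]; move: n_mod.
  by rewrite -def_n addnC modnMDl p_eq -addn1 modnDl modn_small.
pose u : 'I_n := Ordinal (ltnW n_gt1); pose v : 'I_n := Ordinal n_gt1.
have u_lt_p : u < p by rewrite /p addn2.
have v_lt_p : v < p by rewrite /p addn2.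
have neq_uv : u != v by [].
exists (double_fan u v (blocks n p q k)); split.
- exact: fan_design.
- exact: card_fan.
- exact: fan_not_completable.
Qed.

Lemma noncompletable_design_modn_eq1 n k : 2 <= k -> 1 < n -> n %% k == 1 ->
  exists A : {set star n},
    [/\ partial_kstar_design k A, #|A| = (2 * n - 2) %/ k - 1 & ~ completable k A].
Proof.
move=> k_ge2 n_gt1 /eqP n_mod; have k_gt0 : 0 < k by lia.
set m := n %/ k; set q := m - 1.
have def_nm : n = m * k + 1 by rewrite {1}(divn_eq n k) n_mod.
have m_gt0 : 0 < m by rewrite lt0n; apply: contraTneq n_gt1 => m0; rewrite def_nm m0.
have def_n : k.+1 + q * k = n by have := leq_pmull k m_gt0; rewrite def_nm /q mulnBl; lia.
have x_lt_n : k < n by lia.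
pose u : 'I_n := Ordinal (ltnW n_gt1); pose v : 'I_n := Ordinal n_gt1.
pose x : 'I_n := Ordinal x_lt_n.
have u_lt_p : u < k.+1 by [].
have v_lt_p : v < k.+1 by rewrite /= ltnS.
have neq_uv : u != v by [].
have x_notin_uv : x \notin [set u; v] by rewrite !inE -!(inj_eq val_inj) /=; lia.
exists (apex_star k.+1 q k x |: double_fan u v (blocks n k.+1 q k)); split.
- exact: apex_fan_design.
- rewrite card_apex_fan //.
  have -> : 2 * n - 2 = 2 * m * k by rewrite def_nm; lia.
  by rewrite mulnK // /q; lia.
- exact: apex_fan_not_completable.
Qed.

Theorem lemma3 (k : nat) (hk : 2 <= k) :
  (forall n : nat, k_admissible k n -> 1 < n -> n %% k != 1 ->
     exists A : {set star n},
       [/\ partial_kstar_design k A, #|A| = 2 * ((n - 2) %/ k) & ~ completable k A]) /\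
  (forall n : nat, k_admissible k n -> 1 < n -> n %% k == 1 ->
     exists A : {set star n},
       [/\ partial_kstar_design k A, #|A| = (2 * n - 2) %/ k - 1 & ~ completable k A]).
Proof.
split=> n _; [exact: noncompletable_design_modn_neq1 | exact: noncompletable_design_modn_eq1].
Qed.
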